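(* If $\rho_{AB}$ is supported on the symmetric subspace or on the antisymmetric subspace of $\mathcal H_A\otimes\mathcal H_B$ (with $\mathcal H_A\cong\mathcal H_B$), then $\Upsilon(A:B)=0$. In particular, $\Upsilon(A:B)=0$ for every pure state $\rho_{AB}=\ket\phi\bra\phi_{AB}$.
   Context: Let $\rho_{AB}$ be a finite-dimensional bipartite state shared by Alice ($A$) and Bob ($B$), with $A$ and $B$ of the same dimension so that they can be swapped. Let $\ket{\psi}_{ABR}$ be a purification, i.e. ${\rm Tr}_R\ket\psi\bra\psi_{ABR}=\rho_{AB}$, where $R$ is an inaccessible reference system. Let $\psi_{BAR}$ denote the state obtained from $\psi_{ABR}$ by applying the swap of $A$ and $B$. A state exchange protocol on $n$ copies is an LOCC operation between Alice and Bob, acting on $\psi_{ABR}^{\otimes n}$ (with $R$ untouched) together with a supply of maximally entangled qubit pairs (ebits) shared between Alice and Bob, producing a state $\rho^{ex}_{ABR}$. It is faithful if $F(\rho^{ex}_{ABR},\psi_{BAR}^{\otimes n})\to1$ as $n\to\infty$, where $F(\rho,\sigma)={\rm Tr}\sqrt{\sqrt\sigma\rho\sqrt\sigma}$. The uncommon information $\Upsilon(A:B)$ is the infimum of rates $r$ (ebits consumed per copy, asymptotically) for which faithful state exchange protocols exist, classical communication being free. For a pure state $\ket\phi_{AB}$, the symmetric/antisymmetric subspace is taken with respect to a suitable local identification of $\mathcal H_A$ and $\mathcal H_B$ (e.g. via the Schmidt bases). *)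

From HB Require Import structures.
From mathcomp Require Import all_boot all_order all_algebra.
From mathcomp Require Import complex.
From mathcomp Require Import classical_sets filter reals topology normedtype sequences.
Set Implicit Arguments. Unset Strict Implicit. Unset Printing Implicit Defensive.
Import Order.TTheory GRing.Theory Num.Theory numFieldNormedType.Exports.
Local Open Scope ring_scope.
Local Open Scope classical_set_scope.

Section QuantumStateExchange.
Variable R : realType.
Local Notation C := R[i].

(* A Hilbert space is C^T for a finite type T of basis labels; an operator
   from C^T to C^T' is a #|T'| x #|T| complex matrix, whose rows/columns are
   labelled through enum_rank / enum_val. *)
Definition op (T T' : finType) := 'M[C]_(#|T'|, #|T|).
Definition sop (T : finType) := op T T.
Definition ket (T : finType) := 'cV[C]_#|T|.

Definition mkop (T T' : finType) (f : T' -> T -> C) : op T T' :=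
  \matrix_(i, j) f (enum_val i) (enum_val j).
Definition ent (T T' : finType) (M : op T T') (x' : T') (x : T) : C :=
  M (enum_rank x') (enum_rank x).
Definition mkket (T : finType) (f : T -> C) : ket T := \col_i f (enum_val i).
Definition kent (T : finType) (v : ket T) (x : T) : C := v (enum_rank x) 0.

Definition adj m n (M : 'M[C]_(m, n)) : 'M[C]_(n, m) := (map_mx Num.conj M)^T.

Definition proj (T : finType) (v : ket T) : sop T := v *m adj v.

Definition tens (T1 T1' T2 T2' : finType) (K : op T1 T1') (L : op T2 T2') :
  op (T1 * T2)%type (T1' * T2')%type :=
  mkop (fun x' x => ent K x'.1 x.1 * ent L x'.2 x.2).

Definition psd n (M : 'M[C]_n) : Prop :=
  M = adj M /\ forall v : 'cV[C]_n, 0 <= (adj v *m M *m v) 0 0.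
Definition density n (M : 'M[C]_n) : Prop := psd M /\ \tr M = 1.

Definition sqrtm n (M : 'M[C]_n) : 'M[C]_n :=
  xget 0 [set X : 'M[C]_n | psd X /\ X *m X = M].

Definition fidelity n (rho sigma : 'M[C]_n) : C :=
  \tr (sqrtm (sqrtm sigma *m rho *m sqrtm sigma)).

Definition ptrace2 (T TR : finType) (X : sop (T * TR)%type) : sop T :=
  mkop (fun x' x => \sum_(r : TR) ent X (x', r) (x, r)).

Definition sym_vec d (v : ket ('I_d * 'I_d)%type) : Prop :=
  forall a b, kent v (a, b) = kent v (b, a).
Definition antisym_vec d (v : ket ('I_d * 'I_d)%type) : Prop :=
  forall a b, kent v (a, b) = - kent v (b, a).
Definition supported_on (T : finType) (P : ket T -> Prop) (rho : sop T) :=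
  forall w : ket T, P (rho *m w).

Definition purifies d dR (psi : ket (('I_d * 'I_d) * 'I_dR)%type)
  (rho : sop ('I_d * 'I_d)%type) : Prop :=
  adj psi *m psi = 1 /\ ptrace2 (proj psi) = rho.

Definition chan (TR TA TB TA' TB' : finType) :=
  sop ((TA * TB) * TR)%type -> sop ((TA' * TB') * TR)%type.

Definition onA (TR TA TB TA1 : finType) (K : op TA TA1) :
  op ((TA * TB) * TR)%type ((TA1 * TB) * TR)%type := tens (tens K 1%:M) 1%:M.
Definition onB (TR TA TB TB1 : finType) (K : op TB TB1) :
  op ((TA * TB) * TR)%type ((TA * TB1) * TR)%type := tens (tens 1%:M K) 1%:M.

(* A finite-round LOCC protocol: in each round one party performs a local
   quantum instrument with Kraus operators (K m)_m (sum K^* K = 1), broadcasts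
   the outcome m, and the remaining protocol may depend on m. *)
Inductive LOCC (TR : finType) :
  forall (TA TB TA' TB' : finType), chan TR TA TB TA' TB' -> Prop :=
| LOCC_id (TA TB : finType) : @LOCC TR TA TB TA TB (fun X => X)
| LOCC_A (TA TB TA1 TA' TB' M : finType) (K : M -> op TA TA1)
    (L : M -> chan TR TA1 TB TA' TB') :
    \sum_(m : M) adj (K m) *m K m = 1%:M ->
    (forall m, @LOCC TR TA1 TB TA' TB' (L m)) ->
    @LOCC TR TA TB TA' TB'
      (fun X => \sum_(m : M) L m (onA TR TB (K m) *m X *m adj (onA TR TB (K m))))
| LOCC_B (TA TB TB1 TA' TB' M : finType) (K : M -> op TB TB1)
    (L : M -> chan TR TA TB1 TA' TB') :
    \sum_(m : M) adj (K m) *m K m = 1%:M ->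
    (forall m, @LOCC TR TA TB1 TA' TB' (L m)) ->
    @LOCC TR TA TB TA' TB'
      (fun X => \sum_(m : M) L m (onB TR TA (K m) *m X *m adj (onB TR TA (K m)))).

Notation Ln d n := {ffun 'I_n -> 'I_d}.
Notation Eb k := {ffun 'I_k -> bool}.               (* labels of k ebit halves *)

Definition copies d dR (psi : ket (('I_d * 'I_d) * 'I_dR)%type) n :
  ket ((Ln d n * Ln d n) * Ln dR n)%type :=
  mkket (fun x : ((Ln d n * Ln d n) * Ln dR n)%type => \prod_(i < n) kent psi ((x.1.1 i, x.1.2 i), x.2 i)).

(* psi_BAR^{(x) n}: A and B swapped (bases identified via the labels) *)
Definition swapped_copies d dR (psi : ket (('I_d * 'I_d) * 'I_dR)%type) n :
  ket ((Ln d n * Ln d n) * Ln dR n)%type :=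
  mkket (fun x : ((Ln d n * Ln d n) * Ln dR n)%type => \prod_(i < n) kent psi ((x.1.2 i, x.1.1 i), x.2 i)).

(* psi_ABR^{(x) n} (x) Phi^{(x) k}, Phi = (|00> + |11>)/sqrt 2;
   Alice holds (a^n, e_A), Bob holds (b^n, e_B) *)
Definition input_state d dR (psi : ket (('I_d * 'I_d) * 'I_dR)%type) n k :
  ket (((Ln d n * Eb k) * (Ln d n * Eb k)) * Ln dR n)%type :=
  mkket (fun x : (((Ln d n * Eb k) * (Ln d n * Eb k)) * Ln dR n)%type =>
    kent (copies psi n) ((x.1.1.1, x.1.2.1), x.2) *
    (if x.1.1.2 == x.1.2.2 then (((Num.sqrt (2 : R))^-1) ^+ k)%:C%C else 0)).

(* r is an achievable rate: there are ebit numbers k n with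
   limsup_n k n / n <= r and LOCC protocols Lam n on psi^{(x)n} (x) Phi^{(x) k n}
   whose outputs rho^ex_n satisfy F(rho^ex_n, psi_BAR^{(x) n}) -> 1. *)
Definition achievable_rate d dR (psi : ket (('I_d * 'I_d) * 'I_dR)%type)
  (r : R) : Prop :=
  exists (k : nat -> nat)
         (Lam : forall n, chan (Ln dR n) (Ln d n * Eb (k n))%type (Ln d n * Eb (k n))%type
                                 (Ln d n) (Ln d n)),
    (forall n, LOCC (Lam n)) /\
    (forall delta : R, 0 < delta ->
       \forall n \near \oo, (k n)%:R <= (r + delta) * n%:R) /\
    ((fun n => complex.Re
        (fidelity (Lam n (proj (input_state psi n (k n))))
                  (proj (swapped_copies psi n)))) @ \oo --> (1 : R)).

(* uncommon information Upsilon(A:B) (computed from the purification psi) *)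
Definition uncommon_information d dR (psi : ket (('I_d * 'I_d) * 'I_dR)%type)
  : R := inf [set r : R | achievable_rate psi r].

End QuantumStateExchange.

From HB Require Import structures.
From mathcomp Require Import all_boot all_order all_algebra.
From mathcomp Require Import complex spectral.
From mathcomp Require Import classical_sets reals topology normedtype sequences.
From mathcomp Require Import ring.
Set Implicit Arguments. Unset Strict Implicit. Unset Printing Implicit Defensive.
Import Order.TTheory GRing.Theory Num.Theory numFieldNormedType.Exports.
Local Open Scope ring_scope.

(* A symmetric (antisymmetric) state and its purification psi are related
   through the coefficient matrix of psi, whose Gram matrix is rho: it has the
   range of rho, so every slice X_r = psi(., ., r) satisfies X_r^T = +-X_r and
   psi_BAR = +-psi_ABR.  For a pure state phi, psi = phi (x) c, and a singular
   value form Phi = U S W^* of the coefficient matrix of phi gives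
   Phi^T = conj(W) S U^T = (conj(W) U^* ) Phi (U W^T)^T, a product of local
   operators; each is a partial isometry, completed to a two-outcome instrument
   whose failure branches annihilate Phi.  In both cases running the local
   instruments on every copy yields psi_BAR^(x)n exactly, without ebits, so the
   rate 0 is achievable. *)

Section UncommonInformation.
Variable R : realType.
Local Notation C := R[i].

Section Entries.

Lemma sum_enum_rank (T : finType) (F : 'I_#|T| -> C) :
  \sum_(i < #|T|) F i = \sum_(x : T) F (enum_rank x).
Proof.
rewrite (reindex (@enum_rank T)) //.
by exists (@enum_val _ T) => x _; rewrite ?enum_rankK ?enum_valK.
Qed.

Lemma sum_pair (T1 T2 : finType) (F : (T1 * T2)%type -> C) :
  \sum_p F p = \sum_x \sum_y F (x, y).
Proof. by rewrite pair_bigA; apply: eq_bigr => -[]. Qed.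

Lemma sum_eq_nat (T : finType) (y : T) : \sum_x ((y == x)%:R : C) = 1.
Proof. by rewrite (bigD1 y) //= eqxx big1 ?addr0 // => x; rewrite eq_sym => /negPf ->. Qed.

Lemma prod_eq_nat (T : finType) n (f g : {ffun 'I_n -> T}) :
  \prod_i ((f i == g i)%:R : C) = (f == g)%:R.
Proof.
case: eqP => [->|fg]; first by rewrite big1 // => i _; rewrite eqxx.
have /existsP[i /negPf fgi] : [exists i, f i != g i].
  by rewrite -negb_forall; apply: contra_notN fg => /forallP fg; apply/ffunP => i; apply/eqP.
by rewrite (bigD1 i) //= fgi mul0r.
Qed.

Lemma ent_mkop (T T' : finType) (f : T' -> T -> C) x' x : ent (mkop f) x' x = f x' x.
Proof. by rewrite /ent /mkop mxE !enum_rankK. Qed.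

Lemma kent_mkket (T : finType) (f : T -> C) x : kent (mkket f) x = f x.
Proof. by rewrite /kent /mkket mxE enum_rankK. Qed.

Lemma ket_ext (T : finType) (v w : ket R T) : (forall x, kent v x = kent w x) -> v = w.
Proof.
move=> vw; apply/matrixP => i j; rewrite (ord1 j).
by have := vw (enum_val i); rewrite /kent enum_valK.
Qed.

Lemma op_ext (T T' : finType) (M N : op R T T') :
  (forall x' x, ent M x' x = ent N x' x) -> M = N.
Proof.
move=> MN; apply/matrixP => i j.
by have := MN (enum_val i) (enum_val j); rewrite /ent !enum_valK.
Qed.

Lemma ent_mul (T T' T'' : finType) (M : op R T' T'') (N : op R T T') x'' x :
  ent (M *m N) x'' x = \sum_y ent M x'' y * ent N y x.
Proof. by rewrite /ent mxE sum_enum_rank. Qed.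

Lemma kent_mul (T T' : finType) (M : op R T T') (v : ket R T) x' :
  kent (M *m v) x' = \sum_x ent M x' x * kent v x.
Proof. by rewrite /kent mxE sum_enum_rank. Qed.

Lemma kentZ (T : finType) c (v : ket R T) x : kent (c *: v) x = c * kent v x.
Proof. by rewrite /kent mxE. Qed.

Lemma ent_sum (T T' I : finType) (M : I -> op R T T') x' x :
  ent (\sum_i M i) x' x = \sum_i ent (M i) x' x.
Proof. by rewrite /ent summxE. Qed.

Lemma ent1 (T : finType) x' x : ent (1%:M : sop R T) x' x = (x' == x)%:R.
Proof. by rewrite /ent mxE (inj_eq enum_rank_inj). Qed.

Lemma ent_adj (T T' : finType) (M : op R T T') x x' :
  ent (adj M : op R T' T) x x' = (ent M x' x)^*.
Proof. by rewrite /ent /adj !mxE. Qed.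

Lemma ent_proj (T : finType) (v : ket R T) x' x :
  ent (proj v) x' x = kent v x' * (kent v x)^*.
Proof. by rewrite /ent /proj mxE big_ord1 /adj !mxE. Qed.

Lemma ent_tens (T1 T1' T2 T2' : finType) (K : op R T1 T1') (L : op R T2 T2') x' x :
  ent (tens K L) x' x = ent K x'.1 x.1 * ent L x'.2 x.2.
Proof. exact: ent_mkop. Qed.

Lemma adjmx_mul_kent (T : finType) (v w : ket R T) :
  (adj v *m w) 0 0 = \sum_x (kent v x)^* * kent w x.
Proof. by rewrite mxE sum_enum_rank; apply: eq_bigr => x _; rewrite /adj !mxE. Qed.

Lemma ffun0_eq (T : finType) (e e' : {ffun 'I_0 -> T}) : e = e'.
Proof. by apply/ffunP => -[]. Qed.

Lemma sum_ffun0 (T : finType) (F : {ffun 'I_0 -> T} -> C) e0 : \sum_e F e = F e0.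
Proof. by rewrite (bigD1 e0) //= big1 ?addr0 // => e; rewrite (ffun0_eq e e0) eqxx. Qed.

Lemma kent_onA (TR TA TB TA1 : finType) (K : op R TA TA1)
    (v : ket R ((TA * TB) * TR)%type) a1 b r :
  kent (onA TR TB K *m v) ((a1, b), r) = \sum_a ent K a1 a * kent v ((a, b), r).
Proof.
rewrite kent_mul sum_pair sum_pair; apply: eq_bigr => a _.
rewrite (bigD1 b) //= [X in _ + X]big1 ?addr0 => [|b' /negPf b'b]; last first.
  by apply: big1 => r' _; rewrite !ent_tens /= !ent1 [b == _]eq_sym b'b mulr0 !mul0r.
rewrite (bigD1 r) //= big1 ?addr0 => [|r' /negPf r'r]; last first.
  by rewrite !ent_tens /= !ent1 eqxx [r == _]eq_sym r'r mulr0 mul0r.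
by rewrite !ent_tens /= !ent1 !eqxx !mulr1.
Qed.

Lemma kent_onB (TR TA TB TB1 : finType) (K : op R TB TB1)
    (v : ket R ((TA * TB) * TR)%type) a b1 r :
  kent (onB TR TA K *m v) ((a, b1), r) = \sum_b ent K b1 b * kent v ((a, b), r).
Proof.
rewrite kent_mul sum_pair sum_pair (bigD1 a) //= [X in _ + X]big1 ?addr0 => [|a' /negPf a'a].
  apply: eq_bigr => b _; rewrite (bigD1 r) //= big1 ?addr0 => [|r' /negPf r'r].
    by rewrite !ent_tens /= !ent1 !eqxx mul1r mulr1.
  by rewrite !ent_tens /= !ent1 eqxx [r == _]eq_sym r'r mulr0 mul0r.
by apply: big1 => b _; apply: big1 => r' _; rewrite !ent_tens /= !ent1 [a == _]eq_sym a'a !mul0r.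
Qed.

End Entries.

Section Adjoint.

Lemma adjM m n p (A : 'M[C]_(m, n)) (B : 'M[C]_(n, p)) : adj (A *m B) = adj B *m adj A.
Proof. by rewrite /adj map_mxM trmx_mul. Qed.

Lemma adjK m n (A : 'M[C]_(m, n)) : adj (adj A) = A.
Proof. by apply/matrixP => i j; rewrite /adj !mxE conjCK. Qed.

Lemma adjD m n (A B : 'M[C]_(m, n)) : adj (A + B) = adj A + adj B.
Proof. by apply/matrixP => i j; rewrite /adj !mxE rmorphD. Qed.

Lemma adjN m n (A : 'M[C]_(m, n)) : adj (- A) = - adj A.
Proof. by apply/matrixP => i j; rewrite /adj !mxE rmorphN. Qed.

Lemma adjZ m n c (A : 'M[C]_(m, n)) : adj (c *: A) = c^* *: adj A.
Proof. by apply/matrixP => i j; rewrite /adj !mxE rmorphM. Qed.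

Lemma adj1 n : adj (1%:M : 'M[C]_n) = 1%:M.
Proof. by apply/matrixP => i j; rewrite /adj !mxE eq_sym rmorph_nat. Qed.

Lemma adjB1 n (A : 'M[C]_n) : adj (1%:M - A) = 1%:M - adj A.
Proof. by rewrite adjD adjN adj1. Qed.

Lemma adj_trmx m n (A : 'M[C]_(m, n)) : adj A^T = map_mx Num.conj A.
Proof. by apply/matrixP => i j; rewrite /adj !mxE. Qed.

Lemma trmx_adj m n (A : 'M[C]_(m, n)) : (adj A)^T = map_mx Num.conj A.
Proof. by rewrite /adj trmxK. Qed.

Lemma conj_trmx m n (A : 'M[C]_(m, n)) : map_mx Num.conj A^T = adj A.
Proof. by rewrite /adj map_trmx. Qed.

Lemma conj_adj m n (A : 'M[C]_(m, n)) : map_mx Num.conj (adj A) = A^T.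
Proof. by apply/matrixP => i j; rewrite /adj !mxE conjCK. Qed.

Lemma adj_conj m n (A : 'M[C]_(m, n)) : adj (map_mx Num.conj A) = A^T.
Proof. by apply/matrixP => i j; rewrite /adj !mxE conjCK. Qed.

Lemma mulmx_adj_eq0 m n (A : 'M[C]_(m, n)) : A *m adj A = 0 -> A = 0.
Proof.
move=> /matrixP AA0; apply/matrixP => i j; rewrite mxE.
have /eqP := AA0 i i; rewrite !mxE psumr_eq0 => [/allP/(_ j (mem_index_enum _))|k _].
  by rewrite /adj !mxE mul_conjC_eq0 => /eqP.
by rewrite /adj !mxE mul_conjC_ge0.
Qed.

Lemma proj_mulmx (T T' : finType) (M : op R T T') (v : ket R T) :
  M *m proj v *m adj M = proj (M *m v).
Proof. by rewrite /proj adjM !mulmxA. Qed.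

Lemma projZ (T : finType) c (v : ket R T) : proj (c *: v) = (c * c^*) *: proj v.
Proof. by rewrite /proj adjZ -scalemxAl -scalemxAr scalerA. Qed.

(* The range of [A] is the range of its Gram matrix [A *m adj A]. *)
Lemma eigen_of_gram m n (Q : 'M[C]_m) (A : 'M[C]_(m, n)) s :
  Q *m (A *m adj A) = s *: (A *m adj A) -> Q *m A = s *: A.
Proof.
set rho := A *m adj A => Qrho; apply/eqP; rewrite -subr_eq0; apply/eqP.
apply: mulmx_adj_eq0.
have rho_herm : adj rho = rho by rewrite adjM adjK.
have rhoQ : rho *m adj Q = s^* *: rho by rewrite -{1}rho_herm -adjM Qrho adjZ rho_herm.
rewrite adjD adjN adjZ adjM mulmxDr mulmxN !mulmxDl !mulNmx -!scalemxAl.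
rewrite -!scalemxAr -!mulmxA.
have ArhoQ : A *m (adj A *m adj Q) = s^* *: rho by rewrite mulmxA rhoQ.
by rewrite ArhoQ -/rho -scalemxAr Qrho !scalerA mulrC !subrr.
Qed.

End Adjoint.

Section PartialIsometry.

Definition partial_isometry m n (W : 'M[C]_(m, n)) := W *m adj W *m W = W.

Lemma partial_isometry_conj m n (W : 'M[C]_(m, n)) :
  partial_isometry W -> partial_isometry (map_mx Num.conj W).
Proof. by rewrite /partial_isometry adj_conj -conj_adj -!map_mxM => ->. Qed.

Lemma partial_isometry_tr m n (W : 'M[C]_(m, n)) :
  partial_isometry W -> partial_isometry W^T.
Proof. by move=> PW; rewrite /partial_isometry -{4}PW !trmx_mul adj_trmx trmx_adj mulmxA. Qed.

Lemma partial_isometry_mull m n p (U : 'M[C]_(m, n)) (W : 'M[C]_(n, p)) :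
  adj U *m U = 1%:M -> partial_isometry W -> partial_isometry (U *m W).
Proof.
move=> UU PW; rewrite /partial_isometry adjM.
by rewrite !mulmxA -(mulmxA _ (adj U)) UU mulmx1 -!mulmxA [W *m (_ *m _)]mulmxA PW.
Qed.

Lemma partial_isometry_mulr m n p (W : 'M[C]_(m, n)) (V : 'M[C]_(n, p)) :
  V *m adj V = 1%:M -> partial_isometry W -> partial_isometry (W *m V).
Proof.
move=> VV PW; rewrite /partial_isometry adjM.
by rewrite !mulmxA -(mulmxA W) VV mulmx1 PW.
Qed.

(* The two-outcome instrument that applies [W] on its initial space and
   fails on the orthogonal complement. *)
Definition kraus2 n (W : 'M[C]_n) (b : bool) : 'M[C]_n :=
  if b then W else 1%:M - adj W *m W.

Lemma kraus2_complete n (W : 'M[C]_n) :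
  partial_isometry W -> \sum_b adj (kraus2 W b) *m kraus2 W b = 1%:M.
Proof.
move=> PW; rewrite big_bool /= adjB1 adjM adjK.
have WWWW : adj W *m W *m (adj W *m W) = adj W *m W by rewrite -mulmxA [W *m (_ *m _)]mulmxA PW.
by rewrite mulmxBl mul1mx mulmxBr mulmx1 WWWW subrr subr0 addrC subrK.
Qed.

End PartialIsometry.

Section PureFidelity.

Lemma psd_proj n (v : 'cV[C]_n) : psd (v *m adj v).
Proof.
split=> [|w]; first by rewrite adjM adjK.
rewrite !mulmxA -mulmxA.
have -> : adj v *m w = adj (adj w *m v) by rewrite adjM adjK.
set a := adj w *m v; rewrite mxE big_ord1.
have -> : adj a 0 0 = (a 0 0)^* by rewrite /adj !mxE.
exact: mul_conjC_ge0.
Qed.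

Section Proj.
Variables (n : nat) (v : 'cV[C]_n).
Hypothesis v_norm : adj v *m v = 1.
Let P := v *m adj v.

Lemma proj_idem : P *m P = P.
Proof. by rewrite /P mulmxA -(mulmxA v) v_norm mulmx1. Qed.

(* A psd square root [X] of [P] satisfies [X = P X P = c P] with
   [c = v^* X v >= 0] and [c^2 = v^* P v = 1]. *)
Lemma psd_sqrt_proj X : psd X -> X *m X = P -> X = P.
Proof.
move=> [X_herm X_ge0] XX.
have PX : P *m X = X.
  rewrite -[RHS]scale1r; apply: eigen_of_gram.
  by rewrite -X_herm XX proj_idem scale1r.
have P_herm : adj P = P by rewrite adjM adjK.
have XP : X *m P = X by rewrite [Y in Y *m P]X_herm -{1}P_herm -adjM PX -X_herm.
pose c := (adj v *m X *m v) 0 0.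
have vXv : adj v *m X *m v = c%:M.
  by apply/matrixP => i j; rewrite (ord1 i) (ord1 j) [RHS]mxE.
have XcP : X = c *: P.
  have -> : X = v *m (adj v *m X *m v) *m adj v by rewrite !mulmxA -/P -{1}XP -{1}PX !mulmxA.
  by rewrite vXv mul_mx_scalar -scalemxAl.
have cc : c ^+ 2 = 1.
  have cP : c ^+ 2 *: P = P.
    by rewrite -{2}XX XcP -scalemxAl -scalemxAr scalerA proj_idem expr2.
  have vPv : adj v *m P *m v = 1 by rewrite /P !mulmxA v_norm mul1mx v_norm.
  have := congr1 (fun M => (adj v *m M *m v) 0 0) cP.
  by rewrite /= -scalemxAr -scalemxAl vPv !mxE eqxx mulr1.
have c_ge0 : 0 <= c by exact: X_ge0.
have /orP[/eqP c1|/eqP cN1] : (c == 1) || (c == -1) by rewrite -sqrf_eq1 cc.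
  by rewrite XcP c1 scale1r.
by move: c_ge0; rewrite cN1 oppr_ge0 ler10.
Qed.

Lemma sqrtm_proj : sqrtm P = P.
Proof.
apply: xget_unique => [|X [X_psd XX]]; last exact: psd_sqrt_proj.
by split; [exact: psd_proj | exact: proj_idem].
Qed.

Lemma fidelity_proj : fidelity P P = 1.
Proof.
rewrite /fidelity sqrtm_proj !proj_idem sqrtm_proj /P mxtrace_mulC v_norm.
by rewrite mxtrace1.
Qed.

End Proj.
End PureFidelity.

Section SchmidtForm.

Lemma mulmx_diag_row n (f g : 'I_n -> C) :
  diag_mx (\row_i f i) *m diag_mx (\row_i g i) = diag_mx (\row_i (f i * g i)).
Proof. by rewrite mulmx_diag; congr diag_mx; apply/rowP => i; rewrite !mxE. Qed.

Lemma spectralmx_unitary n (B : 'M[C]_n) : spectralmx B *m adj (spectralmx B) = 1%:M.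
Proof. by rewrite -conj_trmx; apply/unitarymxP/spectral_unitarymx. Qed.

Variables (d : nat) (Phi : 'M[C]_d).
Let A := Phi *m adj Phi.
Let P := spectralmx A.
Let l i := spectral_diag A 0 i.
Let P_unitary : P *m adj P = 1%:M := spectralmx_unitary A.

Lemma gram_diagonalization : P *m A *m adj P = diag_mx (\row_i l i).
Proof.
have A_normal : A \is normalmx.
  by apply/normalmxP; rewrite conj_trmx /A adjM adjK.
rewrite [X in _ *m X *m _](orthomx_spectralP A_normal) invmx_unitary ?spectral_unitarymx //.
rewrite conj_trmx -/P !mulmxA P_unitary mul1mx -mulmxA P_unitary mulmx1.
by congr diag_mx; apply/rowP => i; rewrite mxE.
Qed.

Lemma gram_spectral_diag_ge0 i : 0 <= l i.
Proof.
have -> : l i = (P *m Phi *m adj (P *m Phi)) i i.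
  have -> : P *m Phi *m adj (P *m Phi) = P *m A *m adj P by rewrite adjM !mulmxA.
  by rewrite gram_diagonalization !mxE eqxx mulr1n.
by rewrite mxE; apply: sumr_ge0 => j _; rewrite /adj !mxE mul_conjC_ge0.
Qed.

(* With [A = P^* S^2 P], [S^2] diagonal and [D] the pseudo-inverse of [S],
   [Phi = P^* S W^*] is a singular value form in which [W] is only a partial
   isometry; pseudo-inverting avoids completing it to a unitary. *)
Let f i := sqrtC (l i).
Let S := diag_mx (\row_i f i).
Let D := diag_mx (\row_i (f i)^-1).
Let W := adj Phi *m adj P *m D.

Lemma adj_diag_pinv : adj D = D.
Proof.
rewrite /adj map_diag_mx tr_diag_mx; congr diag_mx; apply/rowP => i; rewrite !mxE fmorphV.
congr (_^-1); apply: conj_Creal; apply: ger0_real.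
by rewrite sqrtC_ge0 gram_spectral_diag_ge0.
Qed.

Lemma diag_sqrt_sq : S *m S = diag_mx (\row_i l i).
Proof. by rewrite mulmx_diag_row; congr diag_mx; apply/rowP => i; rewrite !mxE -expr2 sqrtCK. Qed.

Lemma gram_pinv : adj W *m W = D *m (S *m S) *m D.
Proof.
by rewrite diag_sqrt_sq -gram_diagonalization /W !adjM !adjK adj_diag_pinv !mulmxA.
Qed.

Lemma diag_pinv_identities :
  [/\ S *m (D *m (S *m S) *m D) = S, D *m (D *m (S *m S) *m D) = D
    & S *m D *m (S *m S) = S *m S].
Proof.
rewrite !mulmx_diag_row; split.
all: congr diag_mx; apply/rowP => i; rewrite !mxE.
all: by have [->|fi0] := eqVneq (f i) 0; [rewrite !(mul0r, mulr0, invr0, subrr) | field].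
Qed.

Lemma schmidt_reconstruction : Phi = adj P *m S *m adj W.
Proof.
have [_ _ SDSS] := diag_pinv_identities.
have PP : adj P *m P = 1%:M := mulmx1C P_unitary.
have A_eq : A = adj P *m (S *m S) *m P.
  by rewrite diag_sqrt_sq -gram_diagonalization !mulmxA PP mul1mx -mulmxA PP mulmx1.
set M := adj P *m S *m D *m P.
have MA : M *m A = A.
  rewrite /M A_eq !mulmxA -(mulmxA _ P) P_unitary mulmx1; congr (_ *m P).
  by rewrite -!mulmxA [S *m (D *m _)]mulmxA SDSS.
have -> : adj P *m S *m adj W = M *m Phi by rewrite /W !adjM !adjK adj_diag_pinv !mulmxA.
apply/eqP; rewrite -subr_eq0 -[X in X - _]mul1mx -mulmxBl; apply/eqP.
apply: mulmx_adj_eq0; rewrite adjM mulmxA -(mulmxA _ Phi) -/A.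
by rewrite mulmxBl mul1mx MA subrr mul0mx.
Qed.

Lemma schmidt_form : exists U S W : 'M[C]_d,
  [/\ adj U *m U = 1%:M, S^T = S, partial_isometry W,
      S *m (adj W *m W) = S & Phi = U *m S *m adj W].
Proof.
have [SG DG _] := diag_pinv_identities.
exists (adj P), S, W; split.
- by rewrite adjK P_unitary.
- exact: tr_diag_mx.
- by rewrite /partial_isometry -mulmxA gram_pinv /W -mulmxA DG.
- by rewrite gram_pinv SG.
- exact: schmidt_reconstruction.
Qed.

End SchmidtForm.

Section LocalSwap.

(* [X] is the coefficient matrix of a bipartite vector; local Kraus operators
   act on it as [X |-> K *m X *m L^T]. *)
Definition local_swap n (M N : 'M[C]_n) (s : C) (X : 'M[C]_n) :=
  forall b1 b2, kraus2 M b1 *m X *m (kraus2 N b2)^T = if b1 && b2 then s *: X^T else 0.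

Lemma local_swapZ n (M N : 'M[C]_n) s c X :
  local_swap M N s X -> local_swap M N s (c *: X).
Proof.
move=> sw b1 b2; rewrite -scalemxAr -scalemxAl sw linearZ /=.
by case: (b1 && b2); rewrite ?scaler0 // !scalerA mulrC.
Qed.

Lemma local_swap_sym n (X : 'M[C]_n) s :
  s * s = 1 -> X^T = s *: X -> local_swap 1%:M 1%:M s X.
Proof.
move=> ss XT [] [] /=; rewrite ?adj1 ?mulmx1 ?subrr ?trmx0 ?mulmx0 ?mul0mx //.
by rewrite trmx1 mul1mx mulmx1 XT scalerA ss scale1r.
Qed.

Section Schmidt.
Variables (n : nat) (U S W : 'M[C]_n).
Hypotheses (U_isometry : adj U *m U = 1%:M) (S_sym : S^T = S)
  (W_pisometry : partial_isometry W) (SG : S *m (adj W *m W) = S).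
(* [(U S W^* )^T = conj(W) S U^T = K (U S W^* ) L^T] *)
Let K := map_mx Num.conj W *m adj U.
Let L := U *m W^T.

Lemma schmidt_swap_pisometry : partial_isometry K /\ partial_isometry L.
Proof.
split; last exact: partial_isometry_mull (partial_isometry_tr _).
apply: partial_isometry_mulr (partial_isometry_conj _) => //.
by rewrite adjK.
Qed.

Lemma schmidt_local_swap : local_swap K L 1 (U *m S *m adj W).
Proof.
have GS : map_mx Num.conj (adj W *m W) *m S = S.
  have GT : map_mx Num.conj (adj W *m W) = (adj W *m W)^T.
    by rewrite map_mxM conj_adj trmx_mul trmx_adj.
  by rewrite GT -{1}S_sym -trmx_mul SG S_sym.
have KUSW : K *m (U *m S *m adj W) = map_mx Num.conj W *m S *m adj W.
  by rewrite /K !mulmxA -(mulmxA _ (adj U)) U_isometry mulmx1.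
have SWT : (U *m S *m adj W)^T = map_mx Num.conj W *m S *m U^T.
  by rewrite !trmx_mul trmx_adj S_sym mulmxA.
have KKX : (1%:M - adj K *m K) *m (U *m S *m adj W) = 0.
  rewrite mulmxBl mul1mx -[adj K *m K *m _]mulmxA KUSW /K adjM adjK adj_conj !mulmxA.
  have WG : W^T *m map_mx Num.conj W = map_mx Num.conj (adj W *m W).
    by rewrite map_mxM conj_adj.
  by rewrite -[U *m W^T *m _]mulmxA WG -[U *m _ *m S]mulmxA GS subrr.
have KXLL : K *m (U *m S *m adj W) *m (1%:M - adj L *m L)^T = 0.
  rewrite KUSW /L adjM adj_trmx !mulmxA -(mulmxA _ (adj U)) U_isometry mulmx1.
  rewrite linearB /= trmx1 trmx_mul trmxK -[(map_mx _ W)^T]/(adj W) mulmxBr mulmx1 !mulmxA.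
  by rewrite -[_ *m S *m adj W *m W]mulmxA -[_ *m S *m (_ *m _)]mulmxA SG subrr.
move=> [] [] /=.
- rewrite scale1r KUSW SWT /L trmx_mul trmxK !mulmxA -(mulmxA _ (adj W)).
  by rewrite -(mulmxA _ S) SG.
- exact: KXLL.
- by rewrite KKX mul0mx.
- by rewrite KKX mul0mx.
Qed.

End Schmidt.
End LocalSwap.

Section Copies.
Variables (d dR : nat) (psi : ket R (('I_d * 'I_d) * 'I_dR)%type).
Local Notation Ln n := {ffun 'I_n -> 'I_d}.
Local Notation Eb0 := {ffun 'I_0 -> bool}.

Definition slice (r : 'I_dR) : 'M[C]_d := \matrix_(a, b) kent psi ((a, b), r).

(* The outcome-[m] Kraus operator of the instrument [K] applied to every copy;
   it also discards Alice's (empty) share of ebits. *)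
Definition kraus_copies (K : bool -> 'M[C]_d) n (m : {ffun 'I_n -> bool}) :
  op R (Ln n * Eb0)%type (Ln n) :=
  mkop (fun (a' : Ln n) (ae : (Ln n * Eb0)%type) => \prod_i K (m i) (a' i) (ae.1 i)).

Lemma kraus_copies_complete (K : bool -> 'M[C]_d) n :
  \sum_b adj (K b) *m K b = 1%:M ->
  \sum_(m : {ffun 'I_n -> bool}) adj (kraus_copies K m) *m kraus_copies K m = 1%:M.
Proof.
move=> /matrixP K_complete; apply: op_ext => -[a1 e1] [a2 e2].
rewrite ent_sum ent1 (ffun0_eq e1 e2) xpair_eqE eqxx andbT.
under eq_bigr => m _.
  rewrite ent_mul.
  under eq_bigr => a' _ do rewrite ent_adj !ent_mkop rmorph_prod -big_split /=.
  rewrite -(bigA_distr_bigA (fun i t => (K (m i) t (a1 i))^* * K (m i) t (a2 i))).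
  over.
rewrite -(bigA_distr_bigA (fun i b => \sum_t (K b t (a1 i))^* * K b t (a2 i))).
rewrite -prod_eq_nat; apply: eq_bigr => i _; have := K_complete (a1 i) (a2 i).
rewrite summxE !mxE => <-; apply: eq_bigr => b _.
by rewrite mxE; apply: eq_bigr => t _; rewrite /adj !mxE.
Qed.

Lemma kent_input_state n a b e e' r :
  kent (input_state psi n 0) (((a, e), (b, e')), r) = \prod_i kent psi ((a i, b i), r i).
Proof.
by rewrite !kent_mkket /= (ffun0_eq e e') eqxx expr0 -[(1 : R)%:C%C]/(1 : C) mulr1.
Qed.

Lemma kent_copies_branch (KA KB : bool -> 'M[C]_d) n (m m' : {ffun 'I_n -> bool}) a' b' r :
  kent (onB _ _ (kraus_copies KB m') *m (onA _ _ (kraus_copies KA m) *m input_state psi n 0))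
       ((a', b'), r) =
  \prod_i (KA (m i) *m slice (r i) *m (KB (m' i))^T) (a' i) (b' i).
Proof.
have alice b e : kent (onA _ _ (kraus_copies KA m) *m input_state psi n 0) ((a', (b, e)), r) =
    \sum_(a : Ln n) \prod_i (KA (m i) (a' i) (a i) * kent psi ((a i, b i), r i)).
  rewrite kent_onA sum_pair; apply: eq_bigr => a _.
  by rewrite (sum_ffun0 _ e) kent_input_state ent_mkop -big_split.
have bob b : \sum_e ent (kraus_copies KB m') b' (b, e) *
      kent (onA _ _ (kraus_copies KA m) *m input_state psi n 0) ((a', (b, e)), r) =
    \prod_i \sum_t KB (m' i) (b' i) (b i) * (KA (m i) (a' i) t * kent psi ((t, b i), r i)).
  rewrite (sum_ffun0 _ [ffun => true]) alice ent_mkop /= big_distrr /=.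
  by rewrite bigA_distr_bigA; apply: eq_bigr => a _; rewrite -big_split.
rewrite kent_onB sum_pair (eq_bigr _ (fun b _ => bob b)).
rewrite -(bigA_distr_bigA (fun i u =>
  \sum_t KB (m' i) (b' i) u * (KA (m i) (a' i) t * kent psi ((t, u), r i)))).
apply: eq_bigr => i _; rewrite mxE; apply: eq_bigr => u _.
rewrite !mxE big_distrl /=; apply: eq_bigr => t _.
by rewrite !mxE mulrC.
Qed.

End Copies.

Section Rate.
Variables (d dR : nat) (psi : ket R (('I_d * 'I_d) * 'I_dR)%type).

Lemma sum_prod_ffun3 (T1 T2 T3 : finType) n (F : 'I_n -> T1 -> T2 -> T3 -> C) :
  \sum_(a : {ffun 'I_n -> T1}) \sum_(b : {ffun 'I_n -> T2}) \sum_(r : {ffun 'I_n -> T3})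
    \prod_i F i (a i) (b i) (r i) =
  \prod_i \sum_t \sum_u \sum_v F i t u v.
Proof.
rewrite bigA_distr_bigA; apply: eq_bigr => a _.
rewrite bigA_distr_bigA; apply: eq_bigr => b _.
by rewrite bigA_distr_bigA.
Qed.

Lemma swapped_copies_norm n :
  adj psi *m psi = 1 -> adj (swapped_copies psi n) *m swapped_copies psi n = 1.
Proof.
move=> /matrixP/(_ 0 0); rewrite adjmx_mul_kent mxE eqxx mulr1n !sum_pair => psi_norm.
apply/matrixP => i0 j0; rewrite !ord1 adjmx_mul_kent mxE eqxx mulr1n !sum_pair.
under eq_bigr => a _ do under eq_bigr => b _ do under eq_bigr => r _ do
  rewrite kent_mkket /= rmorph_prod -big_split /=.
rewrite (sum_prod_ffun3 (fun i t u v => (kent psi ((u, t), v))^* * kent psi ((u, t), v))).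
by rewrite big1 // => i _; rewrite exchange_big.
Qed.

Lemma achievable_rate_ge0 r : achievable_rate psi r -> 0 <= r.
Proof.
move=> [k [Lam [_ [k_le _]]]]; apply/ler_addgt0Pr => e e_gt0.
have [N _ kN] := k_le e e_gt0.
have := kN N.+1 (leqnSn N); rewrite /= => /(le_trans (ler0n _ _)).
by rewrite pmulr_lge0 // ltr0Sn.
Qed.

Lemma uncommon_information_eq0 : achievable_rate psi 0 -> uncommon_information psi = 0.
Proof.
move=> rate0; apply/eqP; rewrite eq_le; apply/andP; split.
  by apply: ge_inf => //; exists 0 => r; exact: achievable_rate_ge0.
by apply: lb_le_inf; [exists 0 | move=> r; exact: achievable_rate_ge0].
Qed.

End Rate.

Section Exchange.
Variables (d dR : nat) (psi : ket R (('I_d * 'I_d) * 'I_dR)%type) (M N : 'M[C]_d) (s : C).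
Hypotheses (M_pisometry : partial_isometry M) (N_pisometry : partial_isometry N).
Hypotheses (s_unimodular : s * s^* = 1) (psi_swap : forall r, local_swap M N s (slice psi r)).
Local Notation Ln n := {ffun 'I_n -> 'I_d}.
Local Notation Eb0 := {ffun 'I_0 -> bool}.
Local Notation KA := (kraus_copies (kraus2 M)).
Local Notation KB := (kraus_copies (kraus2 N)).

Definition success n : {ffun 'I_n -> bool} := [ffun => true].

Lemma exchange_branch n (m m' : {ffun 'I_n -> bool}) :
  onB _ _ (KB m') *m (onA _ _ (KA m) *m input_state psi n 0) =
  ((m == success n)%:R * (m' == success n)%:R * s ^+ n) *: swapped_copies psi n.
Proof.
apply: ket_ext => -[[a' b'] r]; rewrite kent_copies_branch kentZ kent_mkket /=.
have branch i : (kraus2 M (m i) *m slice psi (r i) *m (kraus2 N (m' i))^T) (a' i) (b' i) =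
    (m i == success n i)%:R * (m' i == success n i)%:R * (s * kent psi ((b' i, a' i), r i)).
  by rewrite psi_swap !ffunE; case: (m i); case: (m' i); rewrite /= ?mxE; ring.
rewrite (eq_bigr _ (fun i _ => branch i)) !big_split /= !prod_eq_nat prodr_const card_ord.
by rewrite -!mulrA.
Qed.

Definition exchange n :
    chan R {ffun 'I_n -> 'I_dR} (Ln n * Eb0)%type (Ln n * Eb0)%type (Ln n) (Ln n) :=
  fun X => \sum_(m : {ffun 'I_n -> bool}) \sum_(m' : {ffun 'I_n -> bool})
    onB _ _ (KB m') *m (onA _ _ (KA m) *m X *m adj (onA _ _ (KA m))) *m adj (onB _ _ (KB m')).
Arguments exchange : clear implicits.

Lemma exchange_LOCC n : LOCC (exchange n).
Proof.
refine (@LOCC_A R _ _ _ _ _ _ _ (@kraus_copies d (kraus2 M) n)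
  (fun m Y => \sum_m' onB _ _ (KB m') *m Y *m adj (onB _ _ (KB m')))
  (kraus_copies_complete _ (kraus2_complete M_pisometry)) _) => m.
refine (@LOCC_B R _ _ _ _ _ _ _ (@kraus_copies d (kraus2 N) n) (fun _ Z => Z)
  (kraus_copies_complete _ (kraus2_complete N_pisometry)) _) => m'.
exact: LOCC_id.
Qed.

Lemma exchange_output n :
  exchange n (proj (input_state psi n 0)) = proj (swapped_copies psi n).
Proof.
have weight (m m' : {ffun 'I_n -> bool}) :
    (m == success n)%:R * (m' == success n)%:R * s ^+ n *
    ((m == success n)%:R * (m' == success n)%:R * s ^+ n)^* =
    (success n == m)%:R * (success n == m')%:R.
  rewrite ![success n == _]eq_sym.
  case: (m == success n); case: (m' == success n); rewrite /= ?(mulr0n, mulr1n, mul0r, mul1r) //.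
  by rewrite rmorphXn -exprMn s_unimodular expr1n.
rewrite /exchange.
under eq_bigr => m _ do under eq_bigr => m' _ do rewrite !proj_mulmx exchange_branch projZ weight.
under eq_bigr => m _ do rewrite -scaler_suml -big_distrr /= sum_eq_nat mulr1.
by rewrite -scaler_suml sum_eq_nat scale1r.
Qed.

Lemma uncommon_information_local_swap :
  adj psi *m psi = 1 -> uncommon_information psi = 0.
Proof.
move=> psi_norm; apply: uncommon_information_eq0.
exists (fun=> 0%N), exchange; split; first exact: exchange_LOCC.
split=> [delta delta_gt0|].
  by exists 0%N => // n _; rewrite add0r; apply: mulr_ge0; [exact: ltW | exact: ler0n].
have -> : (fun n => complex.Re (fidelity (exchange n (proj (input_state psi n 0)))
    (proj (swapped_copies psi n)))) = fun=> 1.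
  apply: boolp.funext => n; rewrite exchange_output fidelity_proj //.
  exact: swapped_copies_norm.
exact: cvg_cst.
Qed.

End Exchange.

Section Purification.

Definition coef_mx (T TR : finType) (psi : ket R (T * TR)%type) : op R TR T :=
  mkop (fun x r => kent psi (x, r)).

Lemma coef_mx_gram (T TR : finType) (psi : ket R (T * TR)%type) :
  coef_mx psi *m adj (coef_mx psi) = ptrace2 (proj psi).
Proof.
apply: op_ext => x' x; rewrite ent_mul ent_mkop; apply: eq_bigr => r _.
by rewrite ent_adj !ent_mkop ent_proj.
Qed.

Lemma op_ext_mul (T T' : finType) (A B : op R T T') :
  (forall v : ket R T, A *m v = B *m v) -> A = B.
Proof.
move=> AB; apply: op_ext => x' x.
have col_ent (Y : op R T T') : kent (Y *m mkket (fun z => (z == x)%:R)) x' = ent Y x' x.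
  rewrite kent_mul (bigD1 x) //= kent_mkket eqxx mulr1 big1 ?addr0 // => z /negPf zx.
  by rewrite kent_mkket zx mulr0.
by rewrite -!col_ent AB.
Qed.

Definition swap_op d : sop R ('I_d * 'I_d)%type := mkop (fun x' x => (x == (x'.2, x'.1))%:R).

Lemma swap_opE d k (Y : 'M[C]_(#|{: 'I_d * 'I_d}|, k)) a b j :
  (swap_op d *m Y) (enum_rank (a, b)) j = Y (enum_rank (b, a)) j.
Proof.
rewrite mxE sum_enum_rank (bigD1 (b, a)) //= big1 ?addr0 => [|x /negPf xba].
  by rewrite /swap_op mxE !enum_rankK eqxx mul1r.
by rewrite /swap_op mxE !enum_rankK xba mul0r.
Qed.

Lemma swap_op_sym d (v : ket R ('I_d * 'I_d)%type) : sym_vec v -> swap_op d *m v = v.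
Proof.
move=> v_sym; apply/matrixP => i j; rewrite -(enum_valK i); case: (enum_val i) => a b.
by rewrite swap_opE; have := v_sym b a; rewrite /kent (ord1 j).
Qed.

Lemma swap_op_antisym d (v : ket R ('I_d * 'I_d)%type) :
  antisym_vec v -> swap_op d *m v = -1 *: v.
Proof.
move=> v_asym; apply/matrixP => i j; rewrite -(enum_valK i); case: (enum_val i) => a b.
by rewrite swap_opE mxE mulN1r; have := v_asym b a; rewrite /kent (ord1 j).
Qed.

(* The purification inherits the exchange symmetry of [rho] through its
   coefficient matrix, whose Gram matrix is [rho]. *)
Lemma purification_swap d dR (rho : sop R ('I_d * 'I_d)%type)
    (psi : ket R (('I_d * 'I_d) * 'I_dR)%type) s :
  purifies psi rho ->
  (forall w : ket R ('I_d * 'I_d)%type, swap_op d *m (rho *m w) = s *: (rho *m w)) ->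
  forall r, (slice psi r)^T = s *: slice psi r.
Proof.
move=> [_ psi_rho] rho_swap r; apply/matrixP => a b.
have : swap_op d *m coef_mx psi = s *: coef_mx psi.
  apply: eigen_of_gram; rewrite coef_mx_gram psi_rho.
  by apply: op_ext_mul => w; rewrite -mulmxA rho_swap -scalemxAl.
move=> /(congr1 (fun Y => ent Y (a, b) r)).
by rewrite /ent swap_opE /coef_mx /mkop !mxE !enum_rankK.
Qed.

Lemma pure_purification d dR (phi : ket R ('I_d * 'I_d)%type)
    (psi : ket R (('I_d * 'I_d) * 'I_dR)%type) :
  adj phi *m phi = 1 -> purifies psi (proj phi) ->
  exists c : 'I_dR -> C, forall r, slice psi r = c r *: \matrix_(a, b) kent phi (a, b).
Proof.
move=> phi_norm [_ psi_phi].
have : proj phi *m coef_mx psi = 1 *: coef_mx psi.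
  by apply: eigen_of_gram; rewrite coef_mx_gram psi_phi proj_idem // scale1r.
rewrite scale1r /proj -mulmxA => psi_eq.
exists (fun r => (adj phi *m coef_mx psi) 0 (enum_rank r)) => r; apply/matrixP => a b.
have /matrixP/(_ (enum_rank (a, b)) (enum_rank r)) := psi_eq.
rewrite mxE big_ord1 -[coef_mx psi _ _]/(ent (coef_mx psi) (a, b) r) ent_mkop => psi_ab.
by rewrite [LHS]mxE [RHS]mxE [X in _ * X]mxE -psi_ab mulrC.
Qed.

End Purification.

Lemma uncommon_information_exchange_symmetric d dR (rho : sop R ('I_d * 'I_d)%type)
    (psi : ket R (('I_d * 'I_d) * 'I_dR)%type) s :
  s * s = 1 -> s^* = s -> purifies psi rho ->
  (forall w : ket R ('I_d * 'I_d)%type, swap_op d *m (rho *m w) = s *: (rho *m w)) ->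
  uncommon_information psi = 0.
Proof.
move=> ss s_real psi_rho rho_swap.
have id_pisometry : partial_isometry (1%:M : 'M[C]_d) by rewrite /partial_isometry adj1 !mulmx1.
apply: (uncommon_information_local_swap (s := s) id_pisometry id_pisometry) => [|r|].
- by rewrite s_real.
- by apply: local_swap_sym => //; exact: purification_swap psi_rho rho_swap r.
- by case: psi_rho.
Qed.

Lemma uncommon_information_pure d dR (phi : ket R ('I_d * 'I_d)%type)
    (psi : ket R (('I_d * 'I_d) * 'I_dR)%type) :
  adj phi *m phi = 1 -> purifies psi (proj phi) -> uncommon_information psi = 0.
Proof.
move=> phi_norm psi_phi.
have [c slice_eq] := pure_purification phi_norm psi_phi.
have [U [S [W [U_iso S_sym W_piso SG phi_eq]]]] := schmidt_form (\matrix_(a, b) kent phi (a, b)).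
have [K_piso L_piso] := schmidt_swap_pisometry U_iso W_piso.
apply: (uncommon_information_local_swap (s := 1) K_piso L_piso) => [|r|].
- by rewrite rmorph1 mulr1.
- by rewrite slice_eq phi_eq; apply/local_swapZ/schmidt_local_swap.
- by case: psi_phi.
Qed.
End UncommonInformation.

Theorem mainTheorem3 (R : realType) :
  (forall (d dR : nat) (rho : sop R ('I_d * 'I_d)%type)
          (psi : ket R (('I_d * 'I_d) * 'I_dR)%type),
     density rho ->
     (supported_on (@sym_vec R d) rho \/ supported_on (@antisym_vec R d) rho) ->
     purifies psi rho ->
     uncommon_information psi = 0)
  /\
  (forall (d dR : nat) (phi : ket R ('I_d * 'I_d)%type)
          (psi : ket R (('I_d * 'I_d) * 'I_dR)%type),
     adj phi *m phi = 1 ->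
     purifies psi (proj phi) ->
     uncommon_information psi = 0).
Proof.
split; last exact: uncommon_information_pure.
move=> d dR rho psi _ [rho_sym|rho_asym] psi_rho.
- apply: (uncommon_information_exchange_symmetric (s := 1)) psi_rho _ => [||w].
  + exact: mulr1.
  + exact: rmorph1.
  + by rewrite scale1r swap_op_sym.
- apply: (uncommon_information_exchange_symmetric (s := -1)) psi_rho _ => [||w].
  + by rewrite mulrNN mulr1.
  + exact: rmorphN1.
  + exact: swap_op_antisym.
Qed.
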